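(* Let $m,n$ be nonzero integers with $|m|<|n|$, and let $u$ be a vertex of $\Lambda_{m,n}$. Then $u$ is of type $a$ if and only if there exists a finite set $V_u$ of vertices of $\Lambda_{m,n}$, each at distance $2$ from $u$, such that $\mathrm{lk}_\Lambda(u)\subseteq \bigcup_{v\in V_u} \mathrm{lk}_\Lambda(v)$.
   Context: $\mathrm{BS}(m,n)=\langle a,t\mid ta^mt^{-1}=a^n\rangle$; its Cayley graph $\Upsilon_{m,n}$ for $\{a,t\}$ has $a$-lines (subgraphs spanned by left cosets $g\langle a\rangle$) and $t$-lines (spanned by left cosets $g\langle t\rangle$), called standard lines. $\Lambda_{m,n}$ is the graph with one vertex per standard line, two vertices being adjacent if the corresponding lines intersect; the type of a vertex is $a$ or $t$ according to the label of its line. $\Lambda_{m,n}$ has the path metric with edges of length $1$, and $\mathrm{lk}_\Lambda(u)$ denotes the set of vertices at distance $1$ from $u$. *)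

(* Baumslag–Solitar group BS(m,n) = <a,t | t a^m t^-1 = a^n>
   realised concretely as words in a, a^-1, t, t^-1 modulo the congruence
   generated by free cancellation and the defining relator. *)
From Stdlib Require Import ZArith List.
Import ListNotations.
Open Scope Z_scope.

Inductive letter := LA | LAi | LT | LTi.

Definition linv (x : letter) : letter :=
  match x with LA => LAi | LAi => LA | LT => LTi | LTi => LT end.

Definition word := list letter.

Definition lpow (x : letter) (k : Z) : word :=
  if (0 <=? k) then repeat x (Z.to_nat k) else repeat (linv x) (Z.to_nat (- k)).

Definition relator (m n : Z) : word := [LT] ++ lpow LA m ++ [LTi] ++ lpow LA (- n).

Inductive bs_eq (m n : Z) : word -> word -> Prop :=
| bs_refl w : bs_eq m n w w
| bs_sym u v : bs_eq m n u v -> bs_eq m n v u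
| bs_trans u v w : bs_eq m n u v -> bs_eq m n v w -> bs_eq m n u w
| bs_free u v x : bs_eq m n (u ++ x :: linv x :: v) (u ++ v)
| bs_rel u v : bs_eq m n (u ++ relator m n ++ v) (u ++ v).

Inductive ltype := TyA | TyT.

Definition gen (ty : ltype) : letter := match ty with TyA => LA | TyT => LT end.

(* A vertex of Lambda_{m,n}: a standard line g<a> or g<t>, represented by
   its type and a representative g of the left coset. *)
Definition vertex := (ltype * word)%type.

Definition same_vertex (m n : Z) (u v : vertex) : Prop :=
  fst u = fst v /\ exists k : Z, bs_eq m n (snd u ++ lpow (gen (fst u)) k) (snd v).

(* Adjacency in Lambda: the two (distinct) standard lines intersect.
   Lines of the same type either coincide or are disjoint (cosets of the
   same subgroup), so adjacency only occurs between lines of different type;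
   an a-line g<a> and a t-line h<t> intersect iff g a^k = h t^l for some k,l. *)
Definition adj (m n : Z) (u v : vertex) : Prop :=
  fst u <> fst v /\
  exists k l : Z, bs_eq m n (snd u ++ lpow (gen (fst u)) k) (snd v ++ lpow (gen (fst v)) l).

Definition dist2 (m n : Z) (u v : vertex) : Prop :=
  ~ same_vertex m n u v /\ ~ adj m n u v /\
  exists w : vertex, adj m n u w /\ adj m n w v.

(* BS(m,n) acts on the real line by affine maps, a : x |-> x + 1 and t : x |-> (n/m) x.
   An a-line g<a> meets the t-lines g a^k <t>; since a^(qn) t = t a^(qm), the t-line
   g a^(j+qn) <t> meets the a-line g a^j t <a>, so the |n| a-lines g a^j t <a>
   (0 <= j < |n|) cover the link of g<a>, and they are at distance 2 from it because
   the scale n/m of t is not 1.  If instead a t-line h<t> other than g<t> meets the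
   a-line g t^N <a>, the translation parts of h and g differ by a nonzero integer
   multiple of (scale of g) (n/m)^N.  As |n/m| > 1, each vertex meets only finitely
   many of the lines g t^N <a>, so no finite family covers the link of g<t>. *)

From Stdlib Require Import ZArith List Lia Setoid Morphisms Reals Lra.
Import ListNotations.
Open Scope Z_scope.

Section Words.
Variables m n : Z.

Local Notation "u ≡ v" := (bs_eq m n u v) (at level 70).

#[export] Instance bs_eq_equivalence : Equivalence (bs_eq m n).
Proof. split; [exact (bs_refl m n) | exact (bs_sym m n) | exact (bs_trans m n)]. Qed.

Lemma bs_eq_app_l w u v : u ≡ v -> w ++ u ≡ w ++ v.
Proof.
  induction 1 as [| | |u v x|u v].
  - reflexivity.
  - now symmetry.
  - etransitivity; eassumption.
  - rewrite !app_assoc. apply bs_free.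
  - rewrite (app_assoc w u), (app_assoc w u v). apply bs_rel.
Qed.

Lemma bs_eq_app_r w u v : u ≡ v -> u ++ w ≡ v ++ w.
Proof.
  induction 1 as [| | |u v x|u v].
  - reflexivity.
  - now symmetry.
  - etransitivity; eassumption.
  - rewrite <- !app_assoc. apply bs_free.
  - rewrite <- !app_assoc. apply bs_rel.
Qed.

#[export] Instance app_bs_eq_proper :
  Proper (bs_eq m n ==> bs_eq m n ==> bs_eq m n) (@app letter).
Proof.
  intros u u' Hu v v' Hv.
  transitivity (u ++ v'); [apply bs_eq_app_l | apply bs_eq_app_r]; assumption.
Qed.

Lemma linvK x : linv (linv x) = x.
Proof. now destruct x. Qed.

Lemma bs_eq_cancel_l x : [linv x; x] ≡ [].
Proof. rewrite <- (linvK x) at 2. exact (bs_free m n [] [] (linv x)). Qed.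

Lemma lpow_linv x k : lpow (linv x) k = lpow x (- k).
Proof.
  unfold lpow. rewrite Z.opp_involutive, linvK.
  destruct (Z.compare_spec k 0) as [->| |];
    [reflexivity | rewrite (proj2 (Z.leb_gt 0 k)), (proj2 (Z.leb_le 0 (- k))) by lia
                 | rewrite (proj2 (Z.leb_le 0 k)), (proj2 (Z.leb_gt 0 (- k))) by lia];
    reflexivity.
Qed.

Lemma lpow_succ_r x k : lpow x (Z.succ k) ≡ lpow x k ++ [x].
Proof.
  unfold lpow. destruct (Z.le_gt_cases 0 k).
  - rewrite !(proj2 (Z.leb_le 0 _)) by lia. rewrite Z2Nat.inj_succ by lia.
    cbn [repeat]. now rewrite repeat_cons.
  - rewrite (proj2 (Z.leb_gt 0 k)) by lia.
    replace (Z.to_nat (- k)) with (S (Z.to_nat (- Z.succ k))) by lia.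
    cbn [repeat]. rewrite repeat_cons, <- app_assoc.
    change ([linv x] ++ [x]) with [linv x; x]. rewrite bs_eq_cancel_l, app_nil_r.
    destruct (Z.leb_spec 0 (Z.succ k)).
    + now replace (Z.succ k) with 0 by lia.
    + reflexivity.
Qed.

Lemma lpow_pred_r x k : lpow x (Z.pred k) ≡ lpow x k ++ [linv x].
Proof.
  rewrite <- (Z.opp_involutive (Z.pred k)), Z.opp_pred, <- lpow_linv,
    lpow_succ_r, lpow_linv, Z.opp_involutive.
  reflexivity.
Qed.

Lemma lpow_add x a b : lpow x a ++ lpow x b ≡ lpow x (a + b).
Proof.
  induction b as [|b IH|b IH] using Z.peano_ind.
  - now rewrite app_nil_r, Z.add_0_r.
  - rewrite Z.add_succ_r, !lpow_succ_r, app_assoc, IH. reflexivity.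
  - rewrite Z.add_pred_r, !lpow_pred_r, app_assoc, IH. reflexivity.
Qed.

Lemma lpow_opp_r x k : lpow x k ++ lpow x (- k) ≡ [].
Proof. now rewrite lpow_add, Z.add_opp_diag_r. Qed.

Lemma lpow_opp_l x k : lpow x (- k) ++ lpow x k ≡ [].
Proof. now rewrite lpow_add, Z.add_opp_diag_l. Qed.

Lemma lpowA_n_t : lpow LA n ++ [LT] ≡ [LT] ++ lpow LA m.
Proof.
  transitivity (relator m n ++ lpow LA n ++ [LT]).
  { symmetry. exact (bs_rel m n [] _). }
  unfold relator. rewrite <- !app_assoc, (app_assoc (lpow LA (- n))), lpow_opp_l.
  change ([LTi] ++ [] ++ [LT]) with [linv LT; LT].
  now rewrite bs_eq_cancel_l, app_nil_r.
Qed.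

Lemma lpowA_t_add a b c d :
  lpow LA a ++ [LT] ≡ [LT] ++ lpow LA b -> lpow LA c ++ [LT] ≡ [LT] ++ lpow LA d ->
  lpow LA (a + c) ++ [LT] ≡ [LT] ++ lpow LA (b + d).
Proof.
  intros Hab Hcd.
  rewrite <- !lpow_add, <- app_assoc, Hcd, app_assoc, Hab, <- app_assoc. reflexivity.
Qed.

Lemma lpowA_t_opp a b :
  lpow LA a ++ [LT] ≡ [LT] ++ lpow LA b -> lpow LA (- a) ++ [LT] ≡ [LT] ++ lpow LA (- b).
Proof.
  intros Hab.
  transitivity (lpow LA (- a) ++ [LT] ++ lpow LA b ++ lpow LA (- b)).
  { now rewrite lpow_opp_r, app_nil_r. }
  rewrite (app_assoc [LT]), <- Hab, !app_assoc, lpow_opp_l. reflexivity.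
Qed.

Lemma lpowA_mul_n_t q : lpow LA (q * n) ++ [LT] ≡ [LT] ++ lpow LA (q * m).
Proof.
  induction q as [|q IH|q IH] using Z.peano_ind.
  - reflexivity.
  - rewrite !Z.mul_succ_l. exact (lpowA_t_add _ _ _ _ IH lpowA_n_t).
  - rewrite !Z.mul_pred_l. exact (lpowA_t_add _ _ _ _ IH (lpowA_t_opp _ _ lpowA_n_t)).
Qed.

End Words.

Definition link_finitely_covered (m n : Z) (u : vertex) : Prop :=
  exists Vu : list vertex,
    (forall v, In v Vu -> dist2 m n u v) /\
    (forall w, adj m n u w -> exists v, In v Vu /\ adj m n v w).

Lemma eventually_forall_in {A : Type} (P : A -> nat -> Prop) (l : list A) :
  (forall x, In x l -> exists B, forall N, (B <= N)%nat -> P x N) ->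
  exists B, forall x N, In x l -> (B <= N)%nat -> P x N.
Proof.
  induction l as [|y l IH]; intros Hl.
  - exists 0%nat. intros x N [].
  - destruct (Hl y (or_introl eq_refl)) as [By Hy].
    destruct IH as [Bl HBl]. { intros x Hx. exact (Hl x (or_intror Hx)). }
    exists (Nat.max By Bl). intros x N [<-|Hx] HN; [apply Hy | apply HBl]; auto; lia.
Qed.

Section AffineModel.
Variables m n : Z.
Hypothesis hm : m <> 0.
Hypothesis hn : n <> 0.

Local Open Scope R_scope.

(* (s, b) stands for the affine map x |-> s x + b of the real line; a acts as
   x |-> x + 1 and t as x |-> (n/m) x, which respects the relator. *)
Definition aff_comp (f g : R * R) : R * R := (fst f * fst g, fst f * snd g + snd f).

Definition bs_ratio : R := IZR n / IZR m.

Definition aff_letter (x : letter) : R * R :=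
  match x with
  | LA => (1, 1) | LAi => (1, -1) | LT => (bs_ratio, 0) | LTi => (/ bs_ratio, 0)
  end.

Fixpoint aff_word (w : word) : R * R :=
  match w with [] => (1, 0) | x :: w' => aff_comp (aff_letter x) (aff_word w') end.

Lemma bs_ratio_neq0 : bs_ratio <> 0.
Proof.
  pose proof (not_0_IZR _ hm). pose proof (not_0_IZR _ hn).
  unfold bs_ratio, Rdiv. apply Rmult_integral_contrapositive_currified; auto with real.
Qed.

Lemma aff_compA f g h : aff_comp f (aff_comp g h) = aff_comp (aff_comp f g) h.
Proof. unfold aff_comp; simpl; f_equal; ring. Qed.

Lemma aff_comp1l f : aff_comp (1, 0) f = f.
Proof. destruct f; unfold aff_comp; simpl; f_equal; ring. Qed.

Lemma aff_word_app u v : aff_word (u ++ v) = aff_comp (aff_word u) (aff_word v).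
Proof.
  induction u as [|x u IH]; simpl.
  - now rewrite aff_comp1l.
  - now rewrite IH, aff_compA.
Qed.

Lemma aff_letter_linv x : aff_comp (aff_letter x) (aff_letter (linv x)) = (1, 0).
Proof.
  pose proof bs_ratio_neq0.
  destruct x; unfold aff_comp; simpl; f_equal; field; assumption.
Qed.

Lemma aff_word_bs_eq p q u v :
  aff_word (relator p q) = (1, 0) -> bs_eq p q u v -> aff_word u = aff_word v.
Proof.
  intros Hrel. induction 1 as [| | |u v x|u v]; try congruence.
  - rewrite !aff_word_app. simpl.
    now rewrite (aff_compA (aff_letter x)), aff_letter_linv, aff_comp1l.
  - now rewrite !aff_word_app, Hrel, aff_comp1l.
Qed.

(* relator 0 0 is [LT; LTi], so bs_eq 0 0 is free equality of words. *)
Lemma aff_word_free_eq u v : bs_eq 0 0 u v -> aff_word u = aff_word v.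
Proof.
  pose proof bs_ratio_neq0.
  apply aff_word_bs_eq. simpl. unfold aff_comp; simpl; f_equal; field; assumption.
Qed.

Lemma aff_word_lpowA k : aff_word (lpow LA k) = (1, IZR k).
Proof.
  induction k as [|k IH|k IH] using Z.peano_ind; [reflexivity| |].
  - rewrite (aff_word_free_eq _ _ (lpow_succ_r 0 0 LA k)), aff_word_app, IH, succ_IZR.
    unfold aff_comp; simpl; f_equal; ring.
  - rewrite (aff_word_free_eq _ _ (lpow_pred_r 0 0 LA k)), aff_word_app, IH,
      <- Z.sub_1_r, minus_IZR.
    unfold aff_comp; simpl; f_equal; ring.
Qed.

Lemma aff_word_lpowT k : aff_word (lpow LT k) = (powerRZ bs_ratio k, 0).
Proof.
  pose proof bs_ratio_neq0.
  induction k as [|k IH|k IH] using Z.peano_ind; [reflexivity| |].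
  - rewrite (aff_word_free_eq _ _ (lpow_succ_r 0 0 LT k)), aff_word_app, IH.
    rewrite <- Z.add_1_r, powerRZ_add by assumption.
    unfold aff_comp; simpl; f_equal; ring.
  - rewrite (aff_word_free_eq _ _ (lpow_pred_r 0 0 LT k)), aff_word_app, IH.
    rewrite <- Z.sub_1_r, <- Z.add_opp_r, powerRZ_add by assumption.
    unfold aff_comp; simpl; f_equal; field; assumption.
Qed.

Lemma aff_word_relator : aff_word (relator m n) = (1, 0).
Proof.
  pose proof (not_0_IZR _ hm). pose proof (not_0_IZR _ hn).
  unfold relator. rewrite !aff_word_app, !aff_word_lpowA, opp_IZR.
  unfold aff_comp; simpl; unfold bs_ratio in *; f_equal; field; split; assumption.
Qed.

Lemma aff_word_inv u v : bs_eq m n u v -> aff_word u = aff_word v.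
Proof. apply aff_word_bs_eq, aff_word_relator. Qed.

Lemma aff_word_scale_neq0 w : fst (aff_word w) <> 0.
Proof.
  pose proof bs_ratio_neq0.
  induction w as [|x w IH]; simpl; [lra|].
  apply Rmult_integral_contrapositive_currified; [|assumption].
  destruct x; simpl; auto with real.
Qed.

Local Close Scope R_scope.

Hypothesis hmn : (Z.abs m < Z.abs n)%Z.

Local Notation "u ≡ v" := (bs_eq m n u v) (at level 70).

Lemma bs_ratio_abs_gt1 : (1 < Rabs bs_ratio)%R.
Proof.
  unfold bs_ratio, Rdiv. rewrite Rabs_mult, Rabs_inv, <- !abs_IZR.
  assert (Hm : (0 < IZR (Z.abs m))%R) by (apply IZR_lt; lia).
  assert (Hmn : (IZR (Z.abs m) < IZR (Z.abs n))%R) by (apply IZR_lt; lia).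
  apply (Rmult_lt_reg_r (IZR (Z.abs m))); [assumption|].
  rewrite Rmult_assoc, Rinv_l by lra. lra.
Qed.

Lemma dist2_a_t_translate g k : dist2 m n (TyA, g) (TyA, g ++ lpow LA k ++ [LT]).
Proof.
  split; [|split].
  - intros [_ [l Hl]]. simpl in Hl.
    apply aff_word_inv, (f_equal fst) in Hl.
    rewrite !aff_word_app, !aff_word_lpowA in Hl. simpl in Hl.
    assert (Hratio : bs_ratio = 1%R).
    { apply (Rmult_eq_reg_l (fst (aff_word g))); [lra | apply aff_word_scale_neq0]. }
    pose proof bs_ratio_abs_gt1 as Hgt. rewrite Hratio, Rabs_R1 in Hgt. lra.
  - intros [Hty _]. now apply Hty.
  - exists (TyT, g ++ lpow LA k). split; split; try discriminate; simpl.
    + exists k, 0. now rewrite app_nil_r.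
    + exists 1, 0. now rewrite app_nil_r, app_assoc.
Qed.

Lemma adj_a_t_translate g h j q l :
  g ++ lpow LA (j + q * n) ≡ h ++ lpow LT l -> adj m n (TyA, g ++ lpow LA j ++ [LT]) (TyT, h).
Proof.
  intros Hgh. split; [discriminate|]. exists (q * m), (l + 1). simpl.
  rewrite <- (lpow_add m n LT l 1), (app_assoc h), <- Hgh, <- lpow_add, <- !app_assoc.
  change (lpow LT 1) with [LT]. rewrite lpowA_mul_n_t. reflexivity.
Qed.

Lemma a_vertex_link_finitely_covered g : link_finitely_covered m n (TyA, g).
Proof.
  exists (map (fun j => (TyA, g ++ lpow LA (Z.of_nat j) ++ [LT]))
              (seq 0 (Z.to_nat (Z.abs n)))).
  split.
  - intros v Hv. apply in_map_iff in Hv. destruct Hv as [j [<- _]].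
    apply dist2_a_t_translate.
  - intros [[|] h] [Hty [k [l Hkl]]]; [now contradiction Hty|]. simpl in Hkl.
    pose proof (Z.mod_pos_bound k (Z.abs n) ltac:(lia)) as Hj.
    exists (TyA, g ++ lpow LA (k mod Z.abs n) ++ [LT]). split.
    + apply in_map_iff. exists (Z.to_nat (k mod Z.abs n)).
      rewrite Z2Nat.id, in_seq by lia. split; [reflexivity | lia].
    + apply (adj_a_t_translate _ _ _ (Z.sgn n * (k / Z.abs n)) l).
      replace (k mod Z.abs n + Z.sgn n * (k / Z.abs n) * n) with k; [exact Hkl|].
      rewrite (Z.div_mod k (Z.abs n)) at 1 by lia. rewrite <- Z.sgn_abs. ring.
Qed.

Lemma t_translation_gap g h N :
  ~ same_vertex m n (TyT, g) (TyT, h) ->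
  adj m n (TyT, h) (TyA, g ++ lpow LT (Z.of_nat N)) ->
  (Rabs (fst (aff_word g)) * Rabs (bs_ratio ^ N)
     <= Rabs (snd (aff_word h) - snd (aff_word g)))%R.
Proof.
  intros Hgh [_ [k [l Hkl]]]. simpl in Hkl.
  destruct (Z.eq_dec l 0) as [->|Hl].
  - exfalso. apply Hgh. split; [reflexivity|]. exists (Z.of_nat N - k). simpl.
    rewrite app_nil_r in Hkl.
    rewrite <- Z.add_opp_r, <- lpow_add, app_assoc, <- Hkl, <- app_assoc, lpow_opp_r.
    now rewrite app_nil_r.
  - apply aff_word_inv, (f_equal snd) in Hkl.
    rewrite !aff_word_app, !aff_word_lpowT, aff_word_lpowA, <- pow_powerRZ in Hkl.
    unfold aff_comp in Hkl; simpl in Hkl.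
    replace (snd (aff_word h) - snd (aff_word g))%R
      with (fst (aff_word g) * bs_ratio ^ N * IZR l)%R by nra.
    assert (Hl1 : (1 <= Rabs (IZR l))%R) by (rewrite <- abs_IZR; apply IZR_le; lia).
    rewrite !Rabs_mult, <- (Rmult_1_r (Rabs _ * Rabs _)) at 1.
    apply Rmult_le_compat_l; [apply Rmult_le_pos; apply Rabs_pos | exact Hl1].
Qed.

Lemma t_vertex_eventually_not_adj g v :
  ~ same_vertex m n (TyT, g) v ->
  exists B, forall N, (B <= N)%nat -> ~ adj m n v (TyA, g ++ lpow LT (Z.of_nat N)).
Proof.
  destruct v as [[|] h]; intros Hgh.
  - exists 0%nat. intros N _ [Hty _]. now apply Hty.
  - set (a := Rabs (fst (aff_word g))).
    set (D := Rabs (snd (aff_word h) - snd (aff_word g))).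
    assert (Ha : (0 < a)%R) by apply Rabs_pos_lt, aff_word_scale_neq0.
    destruct (Pow_x_infinity bs_ratio bs_ratio_abs_gt1 (D / a + 1)) as [B HB].
    exists B. intros N HN Hadj.
    pose proof (t_translation_gap g h N Hgh Hadj) as Hgap. fold a D in Hgap.
    assert (Hgrowth : (a * (D / a + 1) <= a * Rabs (bs_ratio ^ N))%R)
      by (apply Rmult_le_compat_l; [lra | apply Rge_le, HB, HN]).
    replace (a * (D / a + 1))%R with (D + a)%R in Hgrowth by (field; lra).
    lra.
Qed.

Lemma t_vertex_link_not_finitely_covered g : ~ link_finitely_covered m n (TyT, g).
Proof.
  intros [Vu [Hdist Hcover]].
  destruct (eventually_forall_in
              (fun v N => ~ adj m n v (TyA, g ++ lpow LT (Z.of_nat N))) Vu) as [B HB].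
  { intros v Hv. apply t_vertex_eventually_not_adj, (Hdist v Hv). }
  destruct (Hcover (TyA, g ++ lpow LT (Z.of_nat B))) as [v [Hv Hadj]].
  - split; [discriminate|]. exists (Z.of_nat B), 0. simpl. now rewrite app_nil_r.
  - exact (HB v B Hv (le_n B) Hadj).
Qed.

End AffineModel.

Theorem lemma3p3 (m n : Z) (hm : m <> 0) (hn : n <> 0) (hmn : Z.abs m < Z.abs n)
  (u : vertex) :
  fst u = TyA <->
  exists Vu : list vertex,
    (forall v, In v Vu -> dist2 m n u v) /\
    (forall w, adj m n u w -> exists v, In v Vu /\ adj m n v w).
Proof.
  destruct u as [[|] g]; simpl; split; intros Hu.
  - exact (a_vertex_link_finitely_covered m n hm hn hmn g).
  - reflexivity.
  - discriminate.
  - exfalso. exact (t_vertex_link_not_finitely_covered m n hm hn hmn g Hu).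
Qed.
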